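(* Let $G$ be a finite solvable group with commutator subgroup $G'$, and let $X$ be a finite undirected graph. If $G$ is representable on $X$, then $|G/G'|$ and $|\mathrm{Aut}(X)|$ have a common prime factor.
   Context: $G'$ is the subgroup of $G$ generated by all commutators $[x,y]=xyx^{-1}y^{-1}$. $\mathrm{Aut}(X)$ is the automorphism group of $X$. $G$ is representable on $X$ if there is a nontrivial homomorphism $G\to\mathrm{Aut}(X)$. *)

From mathcomp Require Import all_boot all_fingroup all_solvable.
Set Implicit Arguments. Unset Strict Implicit. Unset Printing Implicit Defensive.

Definition undirected_graph (V : finType) (e : rel V) : Prop :=
  symmetric e /\ irreflexive e.

Definition graph_aut (V : finType) (e : rel V) : {set {perm V}} :=
  [set s : {perm V} | [forall x, forall y, e (s x) (s y) == e x y]].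

Lemma graph_aut_group_set (V : finType) (e : rel V) : group_set (graph_aut e).
Proof.
apply/group_setP; split.
  by rewrite inE; apply/forallP=> x; apply/forallP=> y; rewrite !perm1.
move=> s t; rewrite !inE => /forallP Hs /forallP Ht.
apply/forallP=> x; apply/forallP=> y; rewrite !permM.
by rewrite (eqP (forallP (Ht _) _)) (eqP (forallP (Hs _) _)).
Qed.

Canonical graph_aut_group (V : finType) (e : rel V) :=
  Group (graph_aut_group_set e).

From mathcomp Require Import all_boot all_fingroup all_solvable.

Set Implicit Arguments. Unset Strict Implicit. Unset Printing Implicit Defensive.
Local Open Scope group_scope.

(* The image H of G in Aut(X) is a nontrivial solvable group, hence H' is a
   proper subgroup and |H/H'| > 1. Since H/H' is a quotient of G/G' and H is a
   subgroup of Aut(X), any prime factor of |H/H'| divides both orders. *)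

Lemma indexg_der1_gt1 (gT : finGroupType) (H : {group gT}) :
  solvable H -> H :!=: 1 -> 1 < #|H : H^`(1)|.
Proof.
move=> solH ntH; rewrite indexg_gt1.
by case/andP: (sol_der1_proper solH (subxx H) ntH).
Qed.

Lemma indexg_der1_morphim_dvdn (gT rT : finGroupType) (G : {group gT})
    (f : {morphism G >-> rT}) :
  #|f @* G : (f @* G)^`(1)| %| #|G : G^`(1)|.
Proof.
rewrite -(morphim_der f 1 (subxx G)).
by apply: index_morphim; rewrite subIset ?subxx.
Qed.

Theorem mainTheorem5 (gT : finGroupType) (G : {group gT})
    (V : finType) (e : rel V) :
  solvable G ->
  undirected_graph e ->
  (exists f : {morphism G >-> {perm V}},
      (f @* G)%g \subset graph_aut e /\ (f @* G != 1)%g) ->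
  exists p : nat,
    [/\ prime p, p %| #|G / G^`(1)|%g & p %| #|graph_aut e|].
Proof.
move=> solG _ [f [sHA ntH]].
set H := (f @* G)%G.
have gt1 : 1 < #|H : H^`(1)| := indexg_der1_gt1 (morphim_sol f solG) ntH.
exists (pdiv #|H : H^`(1)|); split.
- exact: pdiv_prime.
- rewrite card_quotient ?der_norm //.
  exact: dvdn_trans (pdiv_dvd _) (indexg_der1_morphim_dvdn f).
- apply: dvdn_trans (pdiv_dvd _) (dvdn_trans (dvdn_indexg _ _) _).
  exact: cardSg sHA.
Qed.
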